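(* Let $U,V$ be nonempty sets, $f:U\times V\to\mathbb R$ bounded, $f^-=\sup_{u\in U}\inf_{v\in V}f(u,v)$, $f^+=\inf_{v\in V}\sup_{u\in U}f(u,v)$, and for $p\in[0,1]$ let $f^p=pf^-+(1-p)f^+$. Let $\alpha$ range over all maps $V\to U$ and $\beta$ over all maps $U\to V$. Then $$f^p=\sup_{(u,\alpha)}\inf_{(v,\beta)}\big[p\,f(u,\beta(u))+(1-p)f(\alpha(v),v)\big]=\inf_{(v,\beta)}\sup_{(u,\alpha)}\big[p\,f(u,\beta(u))+(1-p)f(\alpha(v),v)\big],$$ where the sup is over $(u,\alpha)\in U\times V^{\,\text{maps}}$ ($u\in U$, $\alpha:V\to U$) and the inf over $(v,\beta)$ with $v\in V$, $\beta:U\to V$. *)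

From Stdlib Require Import Reals Classical ClassicalEpsilon.
Open Scope R_scope.

Definition is_glb (E : R -> Prop) (m : R) : Prop :=
  (forall x, E x -> m <= x) /\ (forall b, (forall x, E x -> b <= x) -> b <= m).

(* Total supremum / infimum of a set of reals: the least upper bound
   (resp. greatest lower bound) when it exists, and 0 otherwise.
   In the theorem all sets involved are nonempty and bounded, so the
   default value is never used. *)
Definition Rsup (E : R -> Prop) : R :=
  match excluded_middle_informative (exists m, is_lub E m) with
  | left H => proj1_sig (constructive_indefinite_description _ H)
  | right _ => 0
  end.

Definition Rinf (E : R -> Prop) : R :=
  match excluded_middle_informative (exists m, is_glb E m) with
  | left H => proj1_sig (constructive_indefinite_description _ H)
  | right _ => 0
  end.

Definition supI {I : Type} (F : I -> R) : R := Rsup (fun x => exists i, x = F i).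
Definition infI {I : Type} (F : I -> R) : R := Rinf (fun x => exists i, x = F i).

Definition fminus {U V : Type} (f : U -> V -> R) : R :=
  supI (fun u => infI (fun v => f u v)).
Definition fplus {U V : Type} (f : U -> V -> R) : R :=
  infI (fun v => supI (fun u => f u v)).
Definition fp {U V : Type} (f : U -> V -> R) (p : R) : R :=
  p * fminus f + (1 - p) * fplus f.

(* For a fixed pair (u, α), the inner infimum splits: β only enters through
   β u and v only through α v, so the minimiser may choose them independently.
   Hence the max-min value is p·sup_u inf_v f + (1-p)·sup_α inf_v f(α v, v),
   and by the axiom of choice sup_α inf_v f(α v, v) = inf_v sup_u f(u, v),
   since α can pick an ε-maximiser of f(·, v) separately for every v.
   The min-max identity is the max-min identity for the transposed game
   -f(u, v) with weight 1-p. *)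

From Stdlib Require Import Reals Lra ClassicalEpsilon FunctionalExtensionality.
Open Scope R_scope.

Definition bounded_above {I : Type} (F : I -> R) : Prop := exists c, forall i, F i <= c.
Definition bounded_below {I : Type} (F : I -> R) : Prop := exists c, forall i, c <= F i.

Lemma Rsup_lub E : (exists m, is_lub E m) -> is_lub E (Rsup E).
Proof.
  intros H. unfold Rsup. destruct excluded_middle_informative as [H'|]; [|contradiction].
  exact (proj2_sig (constructive_indefinite_description _ H')).
Qed.

Lemma Rsup_default E : ~ (exists m, is_lub E m) -> Rsup E = 0.
Proof. intros H. unfold Rsup. destruct excluded_middle_informative; tauto. Qed.

Lemma Rinf_glb E : (exists m, is_glb E m) -> is_glb E (Rinf E).
Proof.
  intros H. unfold Rinf. destruct excluded_middle_informative as [H'|]; [|contradiction].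
  exact (proj2_sig (constructive_indefinite_description _ H')).
Qed.

Lemma Rinf_default E : ~ (exists m, is_glb E m) -> Rinf E = 0.
Proof. intros H. unfold Rinf. destruct excluded_middle_informative; tauto. Qed.

Section Opposite.
Context {I : Type} (F : I -> R).

Let values := fun x => exists i, x = F i.
Let opp_values := fun x => exists i, x = - F i.

Lemma is_lub_opp_values m : is_lub values m -> is_glb opp_values (- m).
Proof.
  intros [Hub Hl]. split.
  - intros x [i ->]. assert (F i <= m) by (apply Hub; exists i; reflexivity). lra.
  - intros b Hb. assert (m <= - b); [|lra].
    apply Hl. intros x [i ->]. assert (b <= - F i) by (apply Hb; exists i; reflexivity). lra.
Qed.

Lemma is_glb_opp_values m : is_glb opp_values m -> is_lub values (- m).
Proof.
  intros [Hlb Hg]. split.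
  - intros x [i ->]. assert (m <= - F i) by (apply Hlb; exists i; reflexivity). lra.
  - intros b Hb. assert (- b <= m); [|lra].
    apply Hg. intros x [i ->]. assert (F i <= b) by (apply Hb; exists i; reflexivity). lra.
Qed.

Lemma infI_opp : infI (fun i => - F i) = - supI F.
Proof.
  unfold infI, supI. fold opp_values values.
  destruct (classic (exists m, is_lub values m)) as [[m Hm]|Hno].
  - assert (Hglb : is_glb opp_values (- m)) by now apply is_lub_opp_values.
    assert (Hinf := Rinf_glb opp_values (ex_intro _ _ Hglb)).
    rewrite (is_lub_u _ _ _ (Rsup_lub values (ex_intro _ _ Hm)) Hm).
    destruct Hinf as [H1 H2]; destruct Hglb as [H3 H4].
    apply Rle_antisym; [apply H4 | apply H2]; assumption.
  - rewrite (Rsup_default _ Hno), Rinf_default; [lra|].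
    intros [m Hm]. apply Hno. exists (- m). now apply is_glb_opp_values.
Qed.

End Opposite.

Lemma supI_opp {I : Type} (F : I -> R) : supI (fun i => - F i) = - infI F.
Proof.
  rewrite <- (Ropp_involutive (supI _)), <- infI_opp. f_equal. f_equal.
  extensionality i. apply Ropp_involutive.
Qed.

Lemma infI_as_supI {I : Type} (F : I -> R) : infI F = - supI (fun i => - F i).
Proof. rewrite supI_opp. ring. Qed.

Lemma supI_as_infI {I : Type} (F : I -> R) : supI F = - infI (fun i => - F i).
Proof. rewrite infI_opp. ring. Qed.

Section Bounds.
Context {I : Type} (F : I -> R).

Lemma supI_lub : inhabited I -> bounded_above F -> is_lub (fun x => exists i, x = F i) (supI F).
Proof.
  intros [i0] [c Hc]. apply Rsup_lub, upper_bound_thm.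
  - exists c. intros x [i ->]. apply Hc.
  - exists (F i0), i0. reflexivity.
Qed.

Lemma supI_ub i : bounded_above F -> F i <= supI F.
Proof. intros Hb. apply (supI_lub (inhabits i) Hb). exists i. reflexivity. Qed.

Lemma supI_le c : inhabited I -> (forall i, F i <= c) -> supI F <= c.
Proof.
  intros HI Hc. apply (supI_lub HI (ex_intro _ c Hc)). intros x [i ->]. apply Hc.
Qed.

Lemma supI_approx eps : inhabited I -> bounded_above F -> 0 < eps ->
  exists i, supI F - eps < F i.
Proof.
  intros HI Hb He. apply NNPP. intros Hno.
  assert (supI F <= supI F - eps); [|lra].
  apply supI_le; [exact HI|]. intros i. apply Rnot_lt_le. intros Hi. apply Hno. now exists i.
Qed.

Lemma bounded_above_opp : bounded_below F -> bounded_above (fun i => - F i).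
Proof. intros [c Hc]. exists (- c). intros i. specialize (Hc i). lra. Qed.

Lemma bounded_below_opp : bounded_above F -> bounded_below (fun i => - F i).
Proof. intros [c Hc]. exists (- c). intros i. specialize (Hc i). lra. Qed.

End Bounds.

Section InfBounds.
Context {I : Type} (F : I -> R).

Lemma infI_lb i : bounded_below F -> infI F <= F i.
Proof.
  intros Hb. rewrite infI_as_supI.
  pose proof (supI_ub (fun i => - F i) i (bounded_above_opp F Hb)). lra.
Qed.

Lemma infI_ge c : inhabited I -> (forall i, c <= F i) -> c <= infI F.
Proof.
  intros HI Hc. rewrite infI_as_supI.
  assert (supI (fun i => - F i) <= - c); [|lra].
  apply supI_le; [exact HI|]. intros i. specialize (Hc i). lra.
Qed.

Lemma infI_approx eps : inhabited I -> bounded_below F -> 0 < eps ->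
  exists i, F i < infI F + eps.
Proof.
  intros HI Hb He. rewrite infI_as_supI.
  destruct (supI_approx (fun i => - F i) eps HI (bounded_above_opp F Hb) He) as [i Hi].
  exists i. lra.
Qed.

End InfBounds.

Lemma infI_const {I : Type} (c : R) : inhabited I -> infI (fun _ : I => c) = c.
Proof.
  intros [i0]. apply Rle_antisym.
  - apply (infI_lb (fun _ => c) i0). exists c. intros; lra.
  - apply infI_ge; [exact (inhabits i0)|]. intros; lra.
Qed.

Lemma infI_scale {I : Type} (F : I -> R) c : 0 <= c -> inhabited I -> bounded_below F ->
  infI (fun i => c * F i) = c * infI F.
Proof.
  intros [Hc | <-] HI Hb.
  - assert (HbF : bounded_below (fun i => c * F i)).
    { destruct Hb as [b Hb]. exists (c * b). intros i. specialize (Hb i). nra. }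
    apply Rle_antisym.
    + assert (infI (fun i => c * F i) / c <= infI F).
      { apply infI_ge; [exact HI|]. intros i.
        pose proof (infI_lb _ i HbF). apply Rmult_le_reg_l with c; [exact Hc|].
        field_simplify; lra. }
      replace (infI (fun i => c * F i)) with (c * (infI (fun i => c * F i) / c)) by (field; lra).
      now apply Rmult_le_compat_l; [lra|].
    + apply infI_ge; [exact HI|]. intros i.
      apply Rmult_le_compat_l; [lra|]. now apply infI_lb.
  - rewrite Rmult_0_l. transitivity (infI (fun _ : I => 0)); [|exact (infI_const 0 HI)].
    f_equal. extensionality i. ring.
Qed.

Lemma supI_scale {I : Type} (F : I -> R) c : 0 <= c -> inhabited I -> bounded_above F ->
  supI (fun i => c * F i) = c * supI F.
Proof.
  intros Hc HI Hb.
  rewrite !supI_as_infI, <- Ropp_mult_distr_r, <- (infI_scale _ c Hc HI (bounded_below_opp _ Hb)).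
  f_equal. f_equal. extensionality i. ring.
Qed.

Lemma infI_add_indep {I X Y : Type} (φ : I -> X) (ψ : I -> Y) (a : X -> R) (b : Y -> R) :
  (forall x y, exists i, φ i = x /\ ψ i = y) -> inhabited I ->
  bounded_below a -> bounded_below b ->
  infI (fun i => a (φ i) + b (ψ i)) = infI a + infI b.
Proof.
  intros Honto [i0] Ha Hb.
  assert (HI : inhabited I) by exact (inhabits i0).
  apply Rle_antisym.
  - assert (Hab : bounded_below (fun i => a (φ i) + b (ψ i))).
    { destruct Ha as [ca Ha], Hb as [cb Hb]. exists (ca + cb). intros i.
      specialize (Ha (φ i)); specialize (Hb (ψ i)). lra. }
    assert (Hxy : forall x y, infI (fun i => a (φ i) + b (ψ i)) <= a x + b y).
    { intros x y. destruct (Honto x y) as [i [<- <-]].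
      exact (infI_lb (fun i => a (φ i) + b (ψ i)) i Hab). }
    assert (Hy : forall y, infI (fun i => a (φ i) + b (ψ i)) - b y <= infI a).
    { intros y. apply infI_ge; [exact (inhabits (φ i0))|]. intros x. specialize (Hxy x y). lra. }
    assert (infI (fun i => a (φ i) + b (ψ i)) - infI a <= infI b); [|lra].
    apply infI_ge; [exact (inhabits (ψ i0))|]. intros y. specialize (Hy y). lra.
  - apply infI_ge; [exact HI|]. intros i.
    pose proof (infI_lb a (φ i) Ha). pose proof (infI_lb b (ψ i) Hb). lra.
Qed.

Lemma supI_add_indep {I X Y : Type} (φ : I -> X) (ψ : I -> Y) (a : X -> R) (b : Y -> R) :
  (forall x y, exists i, φ i = x /\ ψ i = y) -> inhabited I ->
  bounded_above a -> bounded_above b ->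
  supI (fun i => a (φ i) + b (ψ i)) = supI a + supI b.
Proof.
  intros Honto HI Ha Hb.
  assert (Hopp : (fun i => - (a (φ i) + b (ψ i))) = (fun i => - a (φ i) + - b (ψ i))).
  { extensionality i. ring. }
  rewrite !supI_as_infI, Hopp.
  rewrite (infI_add_indep φ ψ _ _ Honto HI (bounded_below_opp _ Ha) (bounded_below_opp _ Hb)).
  ring.
Qed.

Lemma inhabited_fun {X Y : Type} : inhabited Y -> inhabited (X -> Y).
Proof. intros [y]. exact (inhabits (fun _ => y)). Qed.

Section Game.
Context {U V : Type} (f : U -> V -> R) (B : R).
Hypotheses (hU : inhabited U) (hV : inhabited V) (hf : forall u v, Rabs (f u v) <= B).

Let f_bounds u v : - B <= f u v <= B.
Proof.
  specialize (hf u v). pose proof (Rle_abs (f u v)). pose proof (Rle_abs (- f u v)).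
  rewrite Rabs_Ropp in *. lra.
Qed.

Let row_below u : bounded_below (f u).
Proof. exists (- B). intros v. apply f_bounds. Qed.

Let column_above v : bounded_above (fun u => f u v).
Proof. exists B. intros u. apply f_bounds. Qed.

Let diagonal_below (α : V -> U) : bounded_below (fun v => f (α v) v).
Proof. exists (- B). intros v. apply f_bounds. Qed.

Let row_inf_above : bounded_above (fun u => infI (f u)).
Proof.
  destruct hV as [v0]. exists B. intros u.
  pose proof (infI_lb (f u) v0 (row_below u)). pose proof (f_bounds u v0). lra.
Qed.

Let column_sup_below : bounded_below (fun v => supI (fun u => f u v)).
Proof.
  destruct hU as [u0]. exists (- B). intros v.
  pose proof (supI_ub (fun u => f u v) u0 (column_above v)). pose proof (f_bounds u0 v). lra.
Qed.

Let diagonal_inf_above : bounded_above (fun α : V -> U => infI (fun v => f (α v) v)).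
Proof.
  destruct hV as [v0]. exists B. intros α.
  pose proof (infI_lb _ v0 (diagonal_below α)). pose proof (f_bounds (α v0) v0). lra.
Qed.

Lemma supI_infI_strategy :
  supI (fun α : V -> U => infI (fun v => f (α v) v)) = infI (fun v => supI (fun u => f u v)).
Proof.
  apply Rle_antisym.
  - apply supI_le; [now apply inhabited_fun|]. intros α.
    apply infI_ge; [exact hV|]. intros v.
    pose proof (infI_lb _ v (diagonal_below α)).
    pose proof (supI_ub (fun u => f u v) (α v) (column_above v)). lra.
  - apply Rle_plus_epsilon. intros eps He.
    destruct (choice (fun v u => supI (fun u => f u v) - eps < f u v)) as [α Hα].
    { intros v. now apply supI_approx. }
    assert (infI (fun v => supI (fun u => f u v)) - eps <= infI (fun v => f (α v) v)).
    { apply infI_ge; [exact hV|]. intros v. specialize (Hα v).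
      pose proof (infI_lb _ v column_sup_below). lra. }
    pose proof (supI_ub _ α diagonal_inf_above). lra.
Qed.

Variables (p : R) (hp : 0 <= p <= 1).

Definition payoff (ua : U * (V -> U)) (vb : V * (U -> V)) : R :=
  p * f (fst ua) (snd vb (fst ua)) + (1 - p) * f (snd ua (fst vb)) (fst vb).

Lemma infI_payoff ua :
  infI (payoff ua) = p * infI (f (fst ua)) + (1 - p) * infI (fun v => f (snd ua v) v).
Proof.
  destruct ua as [u α]. unfold payoff; simpl.
  rewrite (infI_add_indep (fun vb : V * (U -> V) => snd vb u) fst
             (fun x => p * f u x) (fun v => (1 - p) * f (α v) v)).
  - rewrite !infI_scale; auto; lra.
  - intros x v. exists (v, fun _ => x). auto.
  - destruct hV as [v0]. exact (inhabits (v0, fun _ => v0)).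
  - destruct (row_below u) as [c Hc]. exists (p * c). intros v. specialize (Hc v). nra.
  - destruct (diagonal_below α) as [c Hc]. exists ((1 - p) * c). intros v. specialize (Hc v). nra.
Qed.

Lemma fp_eq_supI_infI : fp f p = supI (fun ua => infI (payoff ua)).
Proof.
  assert (Hinner : (fun ua => infI (payoff ua)) =
    (fun ua => p * infI (f (fst ua)) + (1 - p) * infI (fun v => f (snd ua v) v))).
  { extensionality ua. apply infI_payoff. }
  rewrite Hinner.
  rewrite (supI_add_indep fst snd (fun u => p * infI (f u))
             (fun α => (1 - p) * infI (fun v => f (α v) v))).
  - rewrite (supI_scale _ p), (supI_scale _ (1 - p)), supI_infI_strategy; try lra;
      auto using inhabited_fun.
  - intros u α. exists (u, α). auto.
  - destruct hU as [u0]. exact (inhabits (u0, fun _ => u0)).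
  - destruct row_inf_above as [c Hc]. exists (p * c). intros u. specialize (Hc u). nra.
  - destruct diagonal_inf_above as [c Hc]. exists ((1 - p) * c). intros α. specialize (Hc α). nra.
Qed.

End Game.

Lemma fp_transpose_opp {U V : Type} (f : U -> V -> R) p :
  fp (fun v u => - f u v) (1 - p) = - fp f p.
Proof.
  unfold fp, fminus, fplus.
  assert (Hminus : (fun v => infI (fun u => - f u v)) = (fun v => - supI (fun u => f u v))).
  { extensionality v. apply infI_opp. }
  assert (Hplus : (fun u => supI (fun v => - f u v)) = (fun u => - infI (fun v => f u v))).
  { extensionality u. apply supI_opp. }
  rewrite Hminus, Hplus, supI_opp, infI_opp. ring.
Qed.

Lemma payoff_transpose_opp {U V : Type} (f : U -> V -> R) p ua vb :
  payoff (fun v u => - f u v) (1 - p) vb ua = - payoff f p ua vb.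
Proof. unfold payoff. ring. Qed.

Theorem mainTheorem10 (U V : Type) (f : U -> V -> R)
  (hU : inhabited U) (hV : inhabited V)
  (hbd : exists B, forall u v, Rabs (f u v) <= B)
  (p : R) (hp : 0 <= p <= 1) :
  fp f p =
    supI (fun ua : U * (V -> U) =>
      infI (fun vb : V * (U -> V) =>
        p * f (fst ua) (snd vb (fst ua)) + (1 - p) * f (snd ua (fst vb)) (fst vb)))
  /\
  fp f p =
    infI (fun vb : V * (U -> V) =>
      supI (fun ua : U * (V -> U) =>
        p * f (fst ua) (snd vb (fst ua)) + (1 - p) * f (snd ua (fst vb)) (fst vb))).
Proof.
  destruct hbd as [B hB].
  change (fp f p = supI (fun ua => infI (payoff f p ua)) /\
          fp f p = infI (fun vb => supI (fun ua => payoff f p ua vb))).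
  split; [now apply (fp_eq_supI_infI f B)|].
  assert (Htransposed := fp_eq_supI_infI (fun v u => - f u v) B hV hU
                           ltac:(intros v u; cbv beta; rewrite Rabs_Ropp; apply hB) (1 - p) ltac:(lra)).
  rewrite fp_transpose_opp in Htransposed.
  assert (Hgame : (fun vb => infI (payoff (fun v u => - f u v) (1 - p) vb)) =
                  (fun vb => - supI (fun ua => payoff f p ua vb))).
  { extensionality vb. rewrite <- infI_opp. f_equal. extensionality ua.
    apply payoff_transpose_opp. }
  rewrite Hgame, supI_opp in Htransposed. lra.
Qed.
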